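(* Let $L$ be a finite power associative loop that is left power alternative and has the left inverse property. Then $L$ has the strong monogenic Lagrange property: for every subloop $H$ of $L$ and every $x\in H$, the order of the subloop $\langle x\rangle$ generated by $x$ divides $|H|$.
   Context: A loop is power associative if each subloop generated by one element is a group. It is left power alternative if $L_{x^n}=L_x^n$ for all $x$ and $n>0$, where $L_a$ is the left translation $y\mapsto ay$. It has the left inverse property if $x^{-1}(xy)=y$ for all $x,y$, where $x^{-1}$ is the element with $x^{-1}x=e$. *)

From mathcomp Require Import all_boot.
Set Implicit Arguments. Unset Strict Implicit. Unset Printing Implicit Defensive.

Section Loops.
Variables (T : finType) (mul : T -> T -> T) (e : T).

Definition is_loop : Prop :=
  (forall x, mul e x = x /\ mul x e = x) /\
  (forall a b, exists! x, mul a x = b) /\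
  (forall a b, exists! y, mul y a = b).

Definition subloop (H : {set T}) : bool :=
  [&& e \in H,
      [forall a, forall b, (a \in H) ==> (b \in H) ==> (mul a b \in H)],
      [forall a, forall b, forall x,
          [&& a \in H, b \in H & mul a x == b] ==> (x \in H)] &
      [forall a, forall b, forall y,
          [&& a \in H, b \in H & mul y a == b] ==> (y \in H)]].

Definition gen (x : T) : {set T} :=
  \bigcap_(H : {set T} | subloop H && (x \in H)) H.

Definition power_assoc : Prop :=
  forall x a b c, a \in gen x -> b \in gen x -> c \in gen x ->
    mul (mul a b) c = mul a (mul b c).

(* x^n, defined by x^0 = e, x^(n+1) = x * x^n (unambiguous under
   power associativity) *)
Definition lpow (x : T) (n : nat) : T := iter n (mul x) e.

Definition left_power_alternative : Prop :=
  forall x n y, 0 < n -> mul (lpow x n) y = iter n (mul x) y.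

Definition left_inverse_property : Prop :=
  forall x xi y, mul xi x = e -> mul xi (mul x y) = y.

End Loops.

(* Left multiplication [mul x] is a permutation of the loop, and by left power
   alternativity its k-th power is left multiplication by x^k.  Right
   cancellation then shows that [mul x]^k fixes some point iff x^k = e, so all
   orbits of [mul x] have the same size d, the order of e.  A subloop H
   containing x is stable under [mul x], hence a union of orbits, so d divides
   |H|.  Finally the orbit {x^k} of e is itself a subloop (the right quotient
   of x^j by x^i is x^((d-1)i + j)), so it is <x> and has d elements. *)
From mathcomp Require Import all_boot.

Set Implicit Arguments.
Unset Strict Implicit.
Unset Printing Implicit Defensive.

Lemma order_le_iter (T : finType) (f : T -> T) k u :
  0 < k -> iter k f u = u -> order f u <= k.
Proof.
move=> k_gt0 fix_u; rewrite leqNgt; apply/negP => /findex_iter.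
by rewrite fix_u findex0 => k0; rewrite -k0 in k_gt0.
Qed.

Lemma eq_order_iter_fixed (T : finType) (f : T -> T) (injf : injective f) u v :
  (forall k, (iter k f u == u) = (iter k f v == v)) -> order f u = order f v.
Proof.
move=> fixE; apply/eqP; rewrite eqn_leq !order_le_iter ?order_gt0 //.
  by apply/eqP; rewrite -fixE; apply/eqP; exact: iter_order.
by apply/eqP; rewrite fixE; apply/eqP; exact: iter_order.
Qed.

Section LeftPowerAlternativeLoop.
Variables (T : finType) (mul : T -> T -> T) (e : T).
Hypotheses (loopL : is_loop mul e) (lpaL : left_power_alternative mul e).

Lemma mul_e_l y : mul e y = y.
Proof. by case: loopL => /(_ y)[]. Qed.

Lemma mul_e_r y : mul y e = y.
Proof. by case: loopL => /(_ y)[]. Qed.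

Lemma mul_linj a : injective (mul a).
Proof.
move=> y z eq_ayz; case: loopL => _ [/(_ a (mul a y))[w [_ uniq_w]] _].
by rewrite -(uniq_w y) // (uniq_w z).
Qed.

Lemma mul_rcancel_e a y : mul a y = y -> a = e.
Proof.
move=> ay_y; case: loopL => _ [_ /(_ y y)[w [_ uniq_w]]].
by rewrite -(uniq_w a ay_y) (uniq_w e (mul_e_l y)).
Qed.

Lemma iter_mul_lpow x k y : iter k (mul x) y = mul (lpow mul e x k) y.
Proof.
case: k => [|k]; first by rewrite mul_e_l.
by rewrite lpaL.
Qed.

Lemma iter_mul_fixed x k y :
  (iter k (mul x) y == y) = (lpow mul e x k == e).
Proof.
rewrite iter_mul_lpow; apply/eqP/eqP => [/mul_rcancel_e // | ->].
exact: mul_e_l.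
Qed.

Lemma order_mul_l x y : order (mul x) y = order (mul x) e.
Proof.
by apply: (eq_order_iter_fixed (@mul_linj x)) => k; rewrite !iter_mul_fixed.
Qed.

Lemma subloop_fclosed H x : subloop mul e H -> x \in H -> fclosed (mul x) H.
Proof.
case/and4P=> _ /forallP mulH /forallP ldivH _ xH a _ /eqP <-.
apply/idP/idP => aH.
  by have := forallP (mulH x) a; rewrite xH aH.
by have := forallP (forallP (ldivH x) (mul x a)) a; rewrite xH aH eqxx.
Qed.

Lemma order_mul_dvd_card H x :
  subloop mul e H -> x \in H -> order (mul x) e %| #|H|.
Proof.
move=> subH xH.
have H_sub : H \subset order_set (mul x) (order (mul x) e).
  by apply/subsetP => y _; rewrite inE order_mul_l.
rewrite -(fcard_order_set (@mul_linj x) H_sub (subloop_fclosed subH xH)).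
exact: dvdn_mull.
Qed.

Section Orbit.
Variable x : T.
Let f := mul x.
Let d := order f e.
Let S := [set y | fconnect f e y].

Lemma orbit_lpow k : lpow mul e x k \in S.
Proof. by rewrite inE fconnect_iter. Qed.

Lemma orbit_lpowP y : y \in S -> exists k, y = lpow mul e x k.
Proof. by rewrite inE => /iter_findex <-; eexists. Qed.

Lemma lpow_mod_order i j : lpow mul e x (d * i + j) = lpow mul e x j.
Proof.
elim: i => [|i IH]; first by rewrite muln0.
rewrite mulnS -addnA addnC /lpow iterD (iter_order (@mul_linj x)).
exact: IH.
Qed.

Lemma lpowD i j : mul (lpow mul e x i) (lpow mul e x j) = lpow mul e x (i + j).
Proof. by rewrite -iter_mul_lpow /lpow iterD. Qed.

Lemma subloop_orbit : subloop mul e S.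
Proof.
apply/and4P; split.
- exact: (orbit_lpow 0).
- apply/forallP => a; apply/forallP => b; apply/implyP => /orbit_lpowP[i ->].
  by apply/implyP => /orbit_lpowP[j ->]; rewrite lpowD orbit_lpow.
- apply/forallP => a; apply/forallP => b; apply/forallP => z.
  apply/implyP => /and3P[/orbit_lpowP[i ->] bS /eqP ab].
  move: bS; rewrite -ab -iter_mul_lpow.
  elim: i z {ab} => [//|i IH] z; rewrite iterSr => /IH.
  by rewrite !inE -(same_fconnect1_r (@mul_linj x)).
- apply/forallP => a; apply/forallP => b; apply/forallP => y.
  apply/implyP => /and3P[/orbit_lpowP[i ->] /orbit_lpowP[j ->] /eqP yb].
  have i_le : i <= d * i by rewrite leq_pmull ?order_gt0.
  case: loopL => _ [_ /(_ (lpow mul e x i) (lpow mul e x j))[z [_ uniq_z]]].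
  rewrite -(uniq_z y yb) (uniq_z (lpow mul e x (d * i - i + j))) ?orbit_lpow //.
  by rewrite lpowD addnAC subnK // lpow_mod_order.
Qed.

Lemma orbit_sub_subloop K : subloop mul e K -> x \in K -> S \subset K.
Proof.
move=> subK xK; apply/subsetP => _ /orbit_lpowP[k ->].
have eK : e \in K by case/and4P: subK.
elim: k => [//|k IH].
by rewrite -(subloop_fclosed subK xK (eqxx _)).
Qed.

Lemma gen_orbit : gen mul e x = S.
Proof.
apply/eqP; rewrite eqEsubset; apply/andP; split.
  apply: bigcap_inf; rewrite subloop_orbit -[x]mul_e_r.
  exact: (orbit_lpow 1).
by apply/bigcapsP => K /andP[]; exact: orbit_sub_subloop.
Qed.

End Orbit.

End LeftPowerAlternativeLoop.

Theorem lemma4p6 (T : finType) (mul : T -> T -> T) (e : T) :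
  is_loop mul e ->
  power_assoc mul e ->
  left_power_alternative mul e ->
  left_inverse_property mul e ->
  forall (H : {set T}), subloop mul e H ->
  forall x, x \in H -> (#|gen mul e x| %| #|H|)%N.
Proof.
move=> loopL _ lpaL _ H subH x xH.
rewrite gen_orbit // cardsE.
exact: order_mul_dvd_card.
Qed.
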